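(* Let $K_1,\dots,K_m\subset\mathbb{R}^n$ be closed sets, each having the SOSH property at $\bar x\in K:=\bigcap_{l=1}^mK_l$, and suppose $\{K_l\}_{l=1}^m$ has linearly regular intersection at $\bar x$. Then $K$ has the SOSH property at $\bar x$.
   Context: For a closed set $C\subset\mathbb{R}^n$ and $\bar x\in C$, the regular normal cone is $\hat N_C(\bar x)=\{y:\langle y,x-\bar x\rangle\le o(\|x-\bar x\|)\text{ for all }x\in C\}$ and the limiting normal cone $N_C(\bar x)$ is the set of $y$ for which there exist $x_i\to\bar x$ with $x_i\in C$ and $y_i\in\hat N_C(x_i)$ with $y_i\to y$. A closed set $C$ has the SOSH property at $\bar x\in C$ if there exist $\delta>0$, $M>0$ such that $\langle v,x-\bar x\rangle\le M\|\bar x-x\|^2$ for all $x\in(\mathbb{B}(\bar x,\delta)\cap C)\setminus\{\bar x\}$ and all $v\in N_C(x)$ with $\|v\|=1$. Closed sets $K_1,\dots,K_m$ have linearly regular intersection at $x\in\bigcap_lK_l$ if $\sum_l v_l=0$ with $v_l\in N_{K_l}(x)$ implies $v_l=0$ for all $l$. *)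

From Stdlib Require Import Reals Lra.
From Stdlib Require Fin.
Open Scope R_scope.

Definition Vec (n : nat) : Type := Fin.t n -> R.

Fixpoint fsum (n : nat) : (Fin.t n -> R) -> R :=
  match n with
  | O => fun _ => 0
  | S k => fun f => f Fin.F1 + fsum k (fun i => f (Fin.FS i))
  end.

Definition vsub {n : nat} (x y : Vec n) : Vec n := fun i => x i - y i.
Definition vinner {n : nat} (x y : Vec n) : R := fsum n (fun i => x i * y i).
Definition vnorm {n : nat} (x : Vec n) : R := sqrt (vinner x x).

Definition closed_setV {n : nat} (C : Vec n -> Prop) : Prop :=
  forall x : Vec n,
    (forall eps, 0 < eps -> exists y, C y /\ vnorm (vsub x y) < eps) -> C x.

Definition reg_normal {n : nat} (C : Vec n -> Prop) (xb y : Vec n) : Prop :=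
  forall eps, 0 < eps -> exists delta, 0 < delta /\
    forall x, C x -> vnorm (vsub x xb) < delta ->
      vinner y (vsub x xb) <= eps * vnorm (vsub x xb).

Definition vconv {n : nat} (u : nat -> Vec n) (l : Vec n) : Prop :=
  forall eps, 0 < eps -> exists N, forall k, (N <= k)%nat -> vnorm (vsub (u k) l) < eps.

Definition lim_normal {n : nat} (C : Vec n -> Prop) (xb y : Vec n) : Prop :=
  exists (xs ys : nat -> Vec n),
    (forall k, C (xs k)) /\ (forall k, reg_normal C (xs k) (ys k)) /\
    vconv xs xb /\ vconv ys y.

Definition SOSH {n : nat} (C : Vec n -> Prop) (xb : Vec n) : Prop :=
  exists delta M, 0 < delta /\ 0 < M /\
    forall x, C x -> vnorm (vsub x xb) <= delta -> x <> xb ->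
      forall v, lim_normal C x v -> vnorm v = 1 ->
        vinner v (vsub x xb) <= M * (vnorm (vsub xb x)) ^ 2.

Definition vsum {n m : nat} (v : Fin.t m -> Vec n) : Vec n :=
  fun j => fsum m (fun l => v l j).

Definition lin_reg_inter {n m : nat} (K : Fin.t m -> Vec n -> Prop) (x : Vec n) : Prop :=
  forall v : Fin.t m -> Vec n,
    (forall l, lim_normal (K l) x (v l)) ->
    (forall j, vsum v j = 0) ->
    forall l j, v l j = 0.

Definition inter_sets {n m : nat} (K : Fin.t m -> Vec n -> Prop) : Vec n -> Prop :=
  fun x => forall l, K l x.

From Stdlib Require Import Reals.
From Stdlib Require Fin.
From Stdlib Require Import Lra Lia Psatz List ClassicalEpsilon Classical.
Open Scope R_scope.

(* Near xb, linear regularity holds in a quantitative form: for regular normals w_l of K_l at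
   points close to xb, sum_l |w_l| <= C |sum_l w_l|, since otherwise normalized counterexamples
   would converge to a nonzero family of limiting normals at xb summing to 0.  By the fuzzy
   intersection rule, obtained by penalizing the distance between a centre z and points y_l of
   the K_l, every regular normal v of K at x is, up to an arbitrarily small error, a sum of
   regular normals w_l of the K_l at points y_l near x.  The SOSH inequalities of the K_l and
   the bound on sum_l |w_l| then give <v, x - xb> <= C M |v| |x - xb|^2 for regular normals,
   and limiting normals inherit this inequality in the limit. *)

(** * Finite sums and Euclidean geometry *)

Lemma fsum_ext n (f g : Fin.t n -> R) : (forall i, f i = g i) -> fsum n f = fsum n g.
Proof.
  revert f g; induction n; intros f g H; simpl; auto.
  rewrite H, (IHn (fun i => f (Fin.FS i)) (fun i => g (Fin.FS i))); auto.
Qed.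

Lemma fsum_plus n (f g : Fin.t n -> R) : fsum n (fun i => f i + g i) = fsum n f + fsum n g.
Proof. revert f g; induction n; intros f g; simpl; [lra|]. rewrite IHn. lra. Qed.

Lemma fsum_mult_l n c (f : Fin.t n -> R) : fsum n (fun i => c * f i) = c * fsum n f.
Proof. revert f; induction n; intros f; simpl; [lra|]. rewrite IHn. lra. Qed.

Lemma fsum_mult_r n c (f : Fin.t n -> R) : fsum n (fun i => f i * c) = fsum n f * c.
Proof. rewrite (fsum_ext n _ (fun i => c * f i)) by (intros; ring). rewrite fsum_mult_l; ring. Qed.

Lemma fsum_zero n : fsum n (fun _ => 0) = 0.
Proof. induction n; simpl; auto. rewrite IHn; lra. Qed.

Lemma fsum_const n c : fsum n (fun _ => c) = INR n * c.
Proof. induction n; simpl fsum; [simpl; ring|]. rewrite IHn, S_INR. ring. Qed.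

Lemma fsum_le n (f g : Fin.t n -> R) : (forall i, f i <= g i) -> fsum n f <= fsum n g.
Proof.
  revert f g; induction n; intros f g H; simpl; [lra|].
  pose proof (IHn (fun i => f (Fin.FS i)) (fun i => g (Fin.FS i)) (fun i => H _)).
  specialize (H Fin.F1). lra.
Qed.

Lemma fsum_nonneg n (f : Fin.t n -> R) : (forall i, 0 <= f i) -> 0 <= fsum n f.
Proof. intros H. rewrite <- (fsum_zero n). apply fsum_le; auto. Qed.

Lemma fsum_term_le n (f : Fin.t n -> R) : (forall i, 0 <= f i) -> forall i, f i <= fsum n f.
Proof.
  revert f; induction n; intros f H i; [inversion i|].
  simpl. pattern i; apply Fin.caseS'.
  - pose proof (fsum_nonneg n (fun j => f (Fin.FS j)) (fun j => H _)). lra.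
  - intros q. pose proof (IHn (fun j => f (Fin.FS j)) (fun j => H _) q).
    specialize (H Fin.F1). simpl in *. lra.
Qed.

Lemma fsum_exchange n m (g : Fin.t m -> Fin.t n -> R) :
  fsum n (fun i => fsum m (fun l => g l i)) = fsum m (fun l => fsum n (fun i => g l i)).
Proof.
  revert g; induction m; intros g; simpl; [apply fsum_zero|].
  rewrite fsum_plus, IHm. reflexivity.
Qed.

Lemma fsum_split n (f : Fin.t n -> R) l :
  fsum n f = f l + fsum n (fun l' => if Fin.eq_dec l l' then 0 else f l').
Proof.
  revert f l; induction n; intros f l; [inversion l|].
  pattern l; apply Fin.caseS'.
  - simpl. destruct (Fin.eq_dec Fin.F1 Fin.F1) as [_|c]; [|congruence]. ring.
  - intros q. simpl. rewrite (IHn (fun i => f (Fin.FS i)) q).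
    rewrite (fsum_ext n (fun i => if Fin.eq_dec (Fin.FS q) (Fin.FS i) then 0 else f (Fin.FS i))
      (fun i => if Fin.eq_dec q i then 0 else f (Fin.FS i))); [ring|].
    intros i. destruct (Fin.eq_dec (Fin.FS q) (Fin.FS i)) as [h1|h1];
      destruct (Fin.eq_dec q i) as [h2|h2]; auto.
    + apply Fin.FS_inj in h1; congruence.
    + subst; congruence.
Qed.

Lemma fsum_change_one n (f g : Fin.t n -> R) l :
  (forall l', l <> l' -> f l' = g l') -> fsum n g - fsum n f = g l - f l.
Proof.
  intros H. rewrite (fsum_split n f l), (fsum_split n g l).
  rewrite (fsum_ext n (fun l' => if Fin.eq_dec l l' then 0 else g l')
    (fun l' => if Fin.eq_dec l l' then 0 else f l')); [ring|].
  intros l'. destruct (Fin.eq_dec l l'); [reflexivity|]. symmetry; auto.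
Qed.

Lemma fsum_cv n (u : nat -> Fin.t n -> R) (l : Fin.t n -> R) :
  (forall i, Un_cv (fun k => u k i) (l i)) -> Un_cv (fun k => fsum n (u k)) (fsum n l).
Proof.
  revert u l; induction n; intros u l H; simpl.
  - intros e he; exists 0%nat; intros; unfold Rdist; rewrite Rminus_0_r, Rabs_R0; lra.
  - apply CV_plus; [apply H|].
    apply (IHn (fun k i => u k (Fin.FS i)) (fun i => l (Fin.FS i))). intros; apply H.
Qed.

Section Euclidean.
Context {n : nat}.
Implicit Types a b c d : Vec n.

Lemma vinner_ext a a' b b' :
  (forall i, a i = a' i) -> (forall i, b i = b' i) -> vinner a b = vinner a' b'.
Proof. intros Ha Hb; unfold vinner; apply fsum_ext; intros i; rewrite Ha, Hb; auto. Qed.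

Lemma vnorm_ext a a' : (forall i, a i = a' i) -> vnorm a = vnorm a'.
Proof. intros; unfold vnorm; f_equal; apply vinner_ext; auto. Qed.

Lemma vinner_sym a b : vinner a b = vinner b a.
Proof. unfold vinner; apply fsum_ext; intros; ring. Qed.

Lemma vinner_lin a b c (s t : R) :
  vinner (fun i => s * a i + t * b i) c = s * vinner a c + t * vinner b c.
Proof. unfold vinner. rewrite <- !fsum_mult_l, <- fsum_plus. apply fsum_ext; intros; ring. Qed.

Lemma vinner_scal_l (s : R) a b : vinner (fun i => s * a i) b = s * vinner a b.
Proof. unfold vinner; rewrite <- fsum_mult_l; apply fsum_ext; intros; ring. Qed.

Lemma vinner_scal_r (s : R) a b : vinner a (fun i => s * b i) = s * vinner a b.
Proof. rewrite vinner_sym, vinner_scal_l, vinner_sym; reflexivity. Qed.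

Lemma vinner_zero_l a b : (forall i, a i = 0) -> vinner a b = 0.
Proof.
  intros H; unfold vinner; rewrite <- (fsum_zero n); apply fsum_ext; intros; rewrite H; ring.
Qed.

Lemma vinner_expand b d (s : R) :
  vinner (fun i => b i + s * d i) (fun i => b i + s * d i)
  = vinner b b + 2 * s * vinner b d + s * s * vinner d d.
Proof.
  unfold vinner.
  rewrite (fsum_ext n _ (fun i => (b i * b i) + (2 * s) * (b i * d i) + (s * s) * (d i * d i)))
    by (intros; ring).
  rewrite !fsum_plus, !fsum_mult_l. ring.
Qed.

Lemma vinner_self_nonneg a : 0 <= vinner a a.
Proof. unfold vinner; apply fsum_nonneg; intros; nra. Qed.

Lemma vinner_self_eq0 a : vinner a a = 0 -> forall i, a i = 0.
Proof.
  intros H i. pose proof (fsum_term_le n (fun i => a i * a i) ltac:(intros; nra) i).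
  unfold vinner in H. nra.
Qed.

Lemma vnorm_nonneg a : 0 <= vnorm a.
Proof. apply sqrt_pos. Qed.

Lemma vnorm_mult_self a : vnorm a * vnorm a = vinner a a.
Proof. apply sqrt_sqrt, vinner_self_nonneg. Qed.

Lemma vnorm_pow2 a : vnorm a ^ 2 = vinner a a.
Proof. rewrite <- vnorm_mult_self; ring. Qed.

Lemma vnorm_le_of_vinner a r : 0 <= r -> vinner a a <= r * r -> vnorm a <= r.
Proof. intros hr h. rewrite <- vnorm_mult_self in h. pose proof (vnorm_nonneg a). nra. Qed.

Lemma vnorm_eq0 a : vnorm a = 0 -> forall i, a i = 0.
Proof. intros H; apply vinner_self_eq0. rewrite <- vnorm_mult_self, H; ring. Qed.

Lemma vnorm_scal (s : R) a : vnorm (fun i => s * a i) = Rabs s * vnorm a.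
Proof.
  unfold vnorm. rewrite <- sqrt_Rsqr_abs, <- sqrt_mult_alt by apply Rle_0_sqr.
  f_equal. unfold vinner, Rsqr. rewrite <- fsum_mult_l. apply fsum_ext; intros; ring.
Qed.

Lemma vnorm_of_zero a : (forall i, a i = 0) -> vnorm a = 0.
Proof.
  intros H. rewrite (vnorm_ext a (fun i => 0 * a i)) by (intros; rewrite H; ring).
  rewrite vnorm_scal, Rabs_R0; ring.
Qed.

Lemma Rabs_coord_le_vnorm a i : Rabs (a i) <= vnorm a.
Proof.
  rewrite <- sqrt_Rsqr_abs. apply sqrt_le_1_alt. unfold Rsqr, vinner.
  apply (fsum_term_le n (fun i => a i * a i)). intros; nra.
Qed.

Lemma vnorm_le_sum_Rabs a : vnorm a <= fsum n (fun i => Rabs (a i)).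
Proof.
  assert (H0 : 0 <= fsum n (fun i => Rabs (a i))) by (apply fsum_nonneg; intros; apply Rabs_pos).
  unfold vnorm. rewrite <- (sqrt_pow2 _ H0). apply sqrt_le_1_alt. clear H0. unfold vinner.
  induction n as [|k IH]; simpl; [lra|].
  specialize (IH (fun i => a (Fin.FS i))). simpl in IH.
  pose proof (fsum_nonneg k (fun i => Rabs (a (Fin.FS i))) (fun i => Rabs_pos _)).
  assert (a Fin.F1 * a Fin.F1 = Rabs (a Fin.F1) * Rabs (a Fin.F1))
    by (rewrite <- Rabs_mult, Rabs_pos_eq; nra).
  pose proof (Rabs_pos (a Fin.F1)). nra.
Qed.

Lemma Cauchy_Schwarz a b : Rabs (vinner a b) <= vnorm a * vnorm b.
Proof.
  assert (Hq : vinner a b * vinner a b <= vinner a a * vinner b b).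
  { assert (Hquad : forall s t, 0 <= s * s * vinner a a - 2 * s * t * vinner a b + t * t * vinner b b).
    { intros s t. pose proof (vinner_self_nonneg (fun i => s * a i + (- t) * b i)) as H.
      rewrite vinner_expand, !vinner_scal_l, !vinner_scal_r in H. lra. }
    pose proof (vinner_self_nonneg a). pose proof (vinner_self_nonneg b).
    destruct (Req_dec (vinner a a) 0) as [Ha|Ha].
    - destruct (Req_dec (vinner a b) 0) as [Hb|Hb]; [rewrite Hb; nra|].
      specialize (Hquad ((vinner b b + 1) / vinner a b) 1).
      assert ((vinner b b + 1) / vinner a b * 1 * vinner a b = vinner b b + 1) by (field; auto).
      nra.
    - specialize (Hquad (vinner a b) (vinner a a)). nra. }
  rewrite <- !vnorm_mult_self in Hq.
  pose proof (vnorm_nonneg a); pose proof (vnorm_nonneg b).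
  rewrite <- sqrt_Rsqr_abs, <- (sqrt_pow2 (vnorm a * vnorm b)) by nra.
  apply sqrt_le_1_alt. unfold Rsqr. nra.
Qed.

Lemma vinner_le_vnorm a b : vinner a b <= vnorm a * vnorm b.
Proof. pose proof (Cauchy_Schwarz a b). pose proof (Rle_abs (vinner a b)). lra. Qed.

Lemma vnorm_triang a b : vnorm (fun i => a i + b i) <= vnorm a + vnorm b.
Proof.
  pose proof (vnorm_nonneg a); pose proof (vnorm_nonneg b).
  apply vnorm_le_of_vinner; [lra|].
  rewrite (vinner_ext (fun i => a i + b i) (fun i => a i + 1 * b i)
             (fun i => a i + b i) (fun i => a i + 1 * b i)) by (intros; ring).
  rewrite vinner_expand, <- !vnorm_mult_self. pose proof (vinner_le_vnorm a b). nra.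
Qed.

Lemma vnorm_vsub_sym a b : vnorm (vsub a b) = vnorm (vsub b a).
Proof.
  rewrite (vnorm_ext (vsub b a) (fun i => (-1) * vsub a b i)) by (intros; unfold vsub; ring).
  rewrite vnorm_scal, Rabs_left by lra. ring.
Qed.

Lemma vnorm_vsub_triang a b c : vnorm (vsub a c) <= vnorm (vsub a b) + vnorm (vsub b c).
Proof.
  rewrite (vnorm_ext (vsub a c) (fun i => vsub a b i + vsub b c i)) by (intros; unfold vsub; ring).
  apply vnorm_triang.
Qed.

Lemma vnorm_le_vsub a b : vnorm a <= vnorm (vsub a b) + vnorm b.
Proof.
  rewrite (vnorm_ext a (fun i => vsub a b i + b i)) by (intros; unfold vsub; ring).
  apply vnorm_triang.
Qed.

Lemma vinner_vsum {m} (w : Fin.t m -> Vec n) b :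
  vinner (vsum w) b = fsum m (fun l => vinner (w l) b).
Proof.
  unfold vinner, vsum. rewrite (fsum_ext n _ (fun i => fsum m (fun l => w l i * b i))).
  - apply fsum_exchange.
  - intros i. rewrite fsum_mult_r. auto.
Qed.

End Euclidean.

(** * Convergence and compactness *)

Lemma Un_cv_const c : Un_cv (fun _ => c) c.
Proof. intros e he; exists 0%nat; intros; unfold Rdist; rewrite Rminus_diag, Rabs_R0; lra. Qed.

Lemma Un_cv_inv_INR_succ : Un_cv (fun k => / (INR k + 1)) 0.
Proof.
  intros e he. destruct (archimed_cor1 e he) as [N [HN1 HN2]]. exists N. intros k hk.
  unfold Rdist. rewrite Rminus_0_r. assert (0 < INR k + 1) by (pose proof (pos_INR k); lra).
  rewrite Rabs_pos_eq by (left; apply Rinv_0_lt_compat; lra).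
  eapply Rle_lt_trans; [|exact HN1].
  apply Rinv_le_contravar; [apply lt_0_INR; lia|]. apply le_INR in hk. lra.
Qed.

Lemma Un_cv_le (a b : nat -> R) A B :
  Un_cv a A -> Un_cv b B -> (exists N, forall k, (N <= k)%nat -> a k <= b k) -> A <= B.
Proof.
  intros Ha Hb [N HN].
  apply Rle_cv_lim with (Un := fun k => a (k + N)%nat) (Vn := fun k => b (k + N)%nat).
  - intros; apply HN; lia.
  - apply CV_shift'; auto.
  - apply CV_shift'; auto.
Qed.

Section Convergence.
Context {n : nat}.

Lemma vconv_coord (u : nat -> Vec n) l : vconv u l -> forall i, Un_cv (fun k => u k i) (l i).
Proof.
  intros H i e he. destruct (H e he) as [N HN]. exists N. intros k hk. unfold Rdist.
  eapply Rle_lt_trans; [apply (Rabs_coord_le_vnorm (vsub (u k) l) i)|]. apply HN; lia.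
Qed.

Lemma vconv_of_coord (u : nat -> Vec n) l :
  (forall i, Un_cv (fun k => u k i) (l i)) -> vconv u l.
Proof.
  intros H.
  assert (Hc : Un_cv (fun k => fsum n (fun i => Rabs (u k i - l i))) (fsum n (fun _ => 0))).
  { apply fsum_cv. intros i. rewrite <- Rabs_R0, <- (Rminus_diag (l i)).
    apply cv_cvabs, CV_minus; [auto|apply Un_cv_const]. }
  rewrite fsum_zero in Hc. intros e he. destruct (Hc e he) as [N HN]. exists N; intros k hk.
  specialize (HN k hk). unfold Rdist in HN. rewrite Rminus_0_r in HN.
  eapply Rle_lt_trans; [apply vnorm_le_sum_Rabs|]. eapply Rle_lt_trans; [apply Rle_abs|]. auto.
Qed.

Lemma vconv_const (c : Vec n) : vconv (fun _ => c) c.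
Proof. apply vconv_of_coord. intros; apply Un_cv_const. Qed.

Lemma vconv_vsub (u w : nat -> Vec n) A B :
  vconv u A -> vconv w B -> vconv (fun k => vsub (u k) (w k)) (vsub A B).
Proof.
  intros Hu Hw. apply vconv_of_coord. intros i. apply CV_minus.
  - apply (vconv_coord u A Hu).
  - apply (vconv_coord w B Hw).
Qed.

Lemma vconv_vsub_const (u : nat -> Vec n) A c : vconv u A -> vconv (fun k => vsub (u k) c) (vsub A c).
Proof. intros Hu. apply (vconv_vsub u (fun _ => c)); [auto|apply vconv_const]. Qed.

Lemma vinner_cv (a b : nat -> Vec n) A B :
  vconv a A -> vconv b B -> Un_cv (fun k => vinner (a k) (b k)) (vinner A B).
Proof.
  intros Ha Hb. apply (fsum_cv n (fun k i => a k i * b k i)). intros i.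
  apply CV_mult; apply vconv_coord; auto.
Qed.

Lemma vnorm_cv (a : nat -> Vec n) A : vconv a A -> Un_cv (fun k => vnorm (a k)) (vnorm A).
Proof.
  intros Ha. apply (continuity_seq sqrt (fun k => vinner (a k) (a k))).
  - apply continuity_pt_sqrt, vinner_self_nonneg.
  - apply vinner_cv; auto.
Qed.

End Convergence.

Definition increasing_index (phi : nat -> nat) : Prop := forall k, (phi k < phi (S k))%nat.

Lemma increasing_index_le phi : increasing_index phi -> forall k j, (k <= j)%nat -> (phi k <= phi j)%nat.
Proof. intros H k j hkj; induction hkj; [lia|]. specialize (H m); lia. Qed.

Lemma increasing_index_ge_id phi : increasing_index phi -> forall k, (k <= phi k)%nat.
Proof. intros H k; induction k; [lia|]. specialize (H k); lia. Qed.

Lemma increasing_index_comp phi psi :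
  increasing_index phi -> increasing_index psi -> increasing_index (fun k => phi (psi k)).
Proof.
  intros Hphi Hpsi k. specialize (Hpsi k).
  pose proof (increasing_index_le phi Hphi (S (psi k)) (psi (S k)) Hpsi). specialize (Hphi (psi k)). lia.
Qed.

Lemma Un_cv_subseq (s : nat -> R) l phi :
  increasing_index phi -> Un_cv s l -> Un_cv (fun k => s (phi k)) l.
Proof.
  intros Hp H e he. destruct (H e he) as [N HN]. exists N; intros k hk. apply HN.
  pose proof (increasing_index_ge_id phi Hp k); lia.
Qed.

(* With pick N k an index >= N where a sequence is within 1/(k+1) of a cluster value, this
   gives an increasing index along which the sequence converges to it. *)
Fixpoint diagonal_index (pick : nat -> nat -> nat) (k : nat) : nat :=
  match k with O => pick O O | S k' => pick (S (diagonal_index pick k')) (S k') end.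

Lemma bounded_Un_cv_subseq (u : nat -> R) B : (forall k, Rabs (u k) <= B) ->
  exists phi, increasing_index phi /\ exists l, Un_cv (fun k => u (phi k)) l.
Proof.
  intros Hb.
  destruct (Bolzano_Weierstrass u (fun c => -B <= c <= B) (compact_P3 (-B) B)) as [l Hl].
  { intros k; specialize (Hb k). pose proof (Rle_abs (u k)). pose proof (Rle_abs (- u k)).
    rewrite Rabs_Ropp in *. lra. }
  assert (Hclose : forall Nk : nat * nat,
             exists p, (fst Nk <= p)%nat /\ Rabs (u p - l) < / (INR (snd Nk) + 1)).
  { intros [N k].
    assert (hpos : 0 < / (INR k + 1)) by (apply Rinv_0_lt_compat; pose proof (pos_INR k); lra).
    destruct (Hl (disc l (mkposreal _ hpos)) N) as [p [hp1 hp2]].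
    - exists (mkposreal _ hpos). intros y hy; exact hy.
    - exists p; split; auto. }
  destruct (choice _ Hclose) as [pk Hpk].
  set (pick := fun N k => pk (N, k)).
  assert (Hnear : forall k, Rabs (u (diagonal_index pick k) - l) < / (INR k + 1)).
  { intros [|k]; [apply (Hpk (0, 0)%nat)|apply (Hpk (S (diagonal_index pick k), S k))]. }
  exists (diagonal_index pick). split.
  - intros k. destruct (Hpk (S (diagonal_index pick k), S k)) as [hge _]. exact hge.
  - exists l. intros e he. destruct (Un_cv_inv_INR_succ e he) as [N HN]. exists N. intros k hk.
    specialize (HN k hk). specialize (Hnear k). unfold Rdist in *. rewrite Rminus_0_r in HN.
    pose proof (Rle_abs (/ (INR k + 1))). lra.
Qed.

Lemma bounded_family_cv_subseq {I : Type} (u : nat -> I -> R) B (lst : list I) :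
  (forall k i, Rabs (u k i) <= B) ->
  exists phi, increasing_index phi /\
    forall i, In i lst -> exists l, Un_cv (fun k => u (phi k) i) l.
Proof.
  intros Hb. induction lst as [|i lst IH].
  - exists (fun k => k). split; [intros k; lia|]. intros i [].
  - destruct IH as [phi [Hphi Hl]].
    destruct (bounded_Un_cv_subseq (fun k => u (phi k) i) B (fun k => Hb _ _)) as [psi [Hpsi [li Hli]]].
    exists (fun k => phi (psi k)). split; [apply increasing_index_comp; auto|].
    intros j [<-|hj]; [exists li; auto|].
    destruct (Hl j hj) as [lj Hlj]. exists lj. apply (Un_cv_subseq (fun k => u (phi k) j) lj psi Hpsi Hlj).
Qed.

Fixpoint fin_list n : list (Fin.t n) :=
  match n with O => nil | S n' => Fin.F1 :: map Fin.FS (fin_list n') end.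

Lemma in_fin_list n (i : Fin.t n) : In i (fin_list n).
Proof.
  induction n; [inversion i|]. pattern i; apply Fin.caseS'; simpl; auto.
  intros p. right. apply in_map. auto.
Qed.

Lemma bounded_vec_family_cv_subseq m n (u : nat -> Fin.t m -> Vec n) B :
  (forall k l, vnorm (u k l) <= B) ->
  exists phi, increasing_index phi /\ exists L, forall l, vconv (fun k => u (phi k) l) (L l).
Proof.
  intros Hb.
  destruct (bounded_family_cv_subseq (fun k (li : Fin.t m * Fin.t n) => u k (fst li) (snd li)) B
              (list_prod (fin_list m) (fin_list n))) as [phi [Hphi Hl]].
  { intros k [l i]; simpl. eapply Rle_trans; [apply Rabs_coord_le_vnorm|apply Hb]. }
  exists phi; split; auto.
  destruct (choice (fun (li : Fin.t m * Fin.t n) r => Un_cv (fun k => u (phi k) (fst li) (snd li)) r))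
    as [L HL].
  { intros [l i]. apply (Hl (l, i)). apply in_prod; apply in_fin_list. }
  exists (fun l i => L (l, i)). intros l. apply vconv_of_coord. intros i. apply (HL (l, i)).
Qed.

Lemma closed_bounded_attains_min m n (D : (Fin.t m -> Vec n) -> Prop)
    (f : (Fin.t m -> Vec n) -> R) B :
  (exists p, D p) ->
  (forall p, D p -> forall l, vnorm (p l) <= B) ->
  (forall u p, (forall k, D (u k)) -> (forall l, vconv (fun k => u k l) (p l)) ->
     D p /\ Un_cv (fun k => f (u k)) (f p)) ->
  (forall p, D p -> 0 <= f p) ->
  exists p, D p /\ forall q, D q -> f p <= f q.
Proof.
  intros [p0 Hp0] Hb Hcl Hpos.
  set (E := fun r => exists p, D p /\ r = - f p).
  destruct (completeness E) as [M [HM1 HM2]].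
  { exists 0. intros r [p [hp ->]]. specialize (Hpos p hp). lra. }
  { exists (- f p0), p0; auto. }
  (* M is the supremum of - f, so - M = inf f *)
  assert (Hk : forall k : nat, exists p, D p /\ - f p > M - / (INR k + 1)).
  { intros k. apply NNPP; intros Hn.
    assert (hpos : 0 < / (INR k + 1)) by (apply Rinv_0_lt_compat; pose proof (pos_INR k); lra).
    assert (M <= M - / (INR k + 1)); [|lra]. apply HM2. intros r [p [hp ->]].
    apply Rnot_gt_le. intros hg. apply Hn. exists p; auto. }
  destruct (choice _ Hk) as [u Hu].
  destruct (bounded_vec_family_cv_subseq m n u B) as [phi [Hphi [L HL]]].
  { intros k l; apply Hb, Hu. }
  destruct (Hcl (fun k => u (phi k)) L) as [HDL Hf]; [intros; apply Hu|auto|].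
  exists L; split; auto. intros q hq.
  assert (f L <= - M).
  { apply (Un_cv_le (fun k => f (u (phi k))) (fun k => - M + / (INR k + 1))); [exact Hf| |].
    - pose proof (CV_plus _ _ (- M) 0 (Un_cv_const (- M)) Un_cv_inv_INR_succ) as Hc.
      rewrite Rplus_0_r in Hc. exact Hc.
    - exists 0%nat. intros k _. destruct (Hu (phi k)) as [_ h].
      pose proof (increasing_index_ge_id phi Hphi k) as hk. apply le_INR in hk.
      assert (/ (INR (phi k) + 1) <= / (INR k + 1))
        by (apply Rinv_le_contravar; pose proof (pos_INR k); lra).
      lra. }
  assert (- f q <= M) by (apply HM1; exists q; auto). lra.
Qed.

(** * Normal cones and the SOSH property *)

Section NormalCones.
Context {n : nat}.
Variable C : Vec n -> Prop.

Lemma reg_normal_scal x w s : 0 <= s -> reg_normal C x w -> reg_normal C x (fun i => s * w i).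
Proof.
  intros hs H e he. destruct (Req_dec s 0) as [->|hs0].
  - exists 1; split; [lra|]. intros y _ _. rewrite vinner_scal_l.
    pose proof (vnorm_nonneg (vsub y x)). nra.
  - destruct (H (e / s)) as [d [hd Hd]]; [apply Rdiv_lt_0_compat; lra|].
    exists d; split; auto. intros y hy hyd. rewrite vinner_scal_l. specialize (Hd y hy hyd).
    apply Rmult_le_compat_l with (r := s) in Hd; [|lra].
    replace (s * (e / s * vnorm (vsub y x))) with (e * vnorm (vsub y x)) in Hd by (field; lra). auto.
Qed.

Lemma reg_normal_of_quadratic_bound p w r c : 0 < r -> 0 <= c ->
  (forall y, C y -> vnorm (vsub y p) < r -> vinner w (vsub y p) <= c * vnorm (vsub y p) ^ 2) ->
  reg_normal C p w.
Proof.
  intros hr hc H e he. exists (Rmin r (e / (c + 1))).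
  split; [apply Rmin_pos; auto; apply Rdiv_lt_0_compat; lra|].
  intros y hy hd. pose proof (Rmin_l r (e / (c + 1))). pose proof (Rmin_r r (e / (c + 1))).
  specialize (H y hy ltac:(lra)). pose proof (vnorm_nonneg (vsub y p)) as hn.
  set (t := vnorm (vsub y p)) in *.
  assert (t * (c + 1) <= e).
  { assert (t < e / (c + 1)) by lra. apply Rmult_lt_compat_r with (r := c + 1) in H2; [|lra].
    replace (e / (c + 1) * (c + 1)) with e in H2 by (field; lra). lra. }
  nra.
Qed.

Lemma lim_normal_of_reg_normal x w : C x -> reg_normal C x w -> lim_normal C x w.
Proof. intros hx hw. exists (fun _ => x), (fun _ => w). repeat split; auto; apply vconv_const. Qed.

Lemma closed_setV_cv (u : nat -> Vec n) l : closed_setV C -> (forall k, C (u k)) -> vconv u l -> C l.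
Proof.
  intros Hc Hu Hl. apply Hc. intros e he. destruct (Hl e he) as [N HN]. exists (u N). split; auto.
  rewrite vnorm_vsub_sym. apply HN; lia.
Qed.

Definition SOSH_with (xb : Vec n) (d M : R) : Prop :=
  forall x, C x -> vnorm (vsub x xb) <= d -> x <> xb ->
    forall v, lim_normal C x v -> vnorm v = 1 ->
      vinner v (vsub x xb) <= M * (vnorm (vsub xb x)) ^ 2.

Lemma SOSH_with_reg_normal xb d M y w : 0 <= M -> SOSH_with xb d M ->
  C y -> vnorm (vsub y xb) <= d -> reg_normal C y w ->
  vinner w (vsub y xb) <= M * vnorm w * vnorm (vsub y xb) ^ 2.
Proof.
  intros hM HS hy hyd hw. pose proof (vnorm_nonneg w). pose proof (vnorm_nonneg (vsub y xb)).
  assert (hR : 0 <= M * vnorm w * vnorm (vsub y xb) ^ 2)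
    by (apply Rmult_le_pos; [apply Rmult_le_pos|apply pow2_ge_0]; auto).
  destruct (classic (y = xb)) as [->|hne].
  { rewrite vinner_sym, vinner_zero_l; auto. intros; unfold vsub; ring. }
  destruct (Req_dec (vnorm w) 0) as [h0|h0].
  { rewrite vinner_zero_l; auto. apply vnorm_eq0; auto. }
  set (u := fun i => / vnorm w * w i).
  assert (hu1 : vnorm u = 1).
  { unfold u. rewrite vnorm_scal, Rabs_pos_eq; [field; auto|left; apply Rinv_0_lt_compat; lra]. }
  assert (Hu : lim_normal C y u).
  { apply lim_normal_of_reg_normal; auto. apply reg_normal_scal; auto. left; apply Rinv_0_lt_compat; lra. }
  specialize (HS y hy hyd hne u Hu hu1). rewrite vnorm_vsub_sym in HS.
  unfold u in HS. rewrite vinner_scal_l in HS.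
  apply (Rmult_le_compat_l (vnorm w)) in HS; auto.
  rewrite <- Rmult_assoc, Rinv_r in HS by auto. nra.
Qed.

End NormalCones.

(** * Uniform constants near xb *)

Lemma SOSH_with_mono n (C : Vec n -> Prop) xb d d' M M' :
  SOSH_with C xb d M -> 0 < d' <= d -> 0 <= M <= M' -> SOSH_with C xb d' M'.
Proof.
  intros H hd hM x hx hxd hne v Hv hv1. eapply Rle_trans; [apply (H x hx ltac:(lra) hne v Hv hv1)|].
  apply Rmult_le_compat_r; [apply pow2_ge_0|lra].
Qed.

Lemma SOSH_uniform n m (K : Fin.t m -> Vec n -> Prop) xb :
  (forall l, SOSH (K l) xb) -> exists d M, 0 < d /\ 0 < M /\ forall l, SOSH_with (K l) xb d M.
Proof.
  revert K; induction m as [|m IH]; intros K HK.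
  - exists 1, 1; repeat split; try lra. intros l; inversion l.
  - destruct (IH (fun l => K (Fin.FS l)) (fun l => HK _)) as [d [M [hd [hM HS]]]].
    destruct (HK Fin.F1) as [d1 [M1 [hd1 [hM1 HS1]]]].
    pose proof (Rmin_pos d d1 hd hd1). pose proof (Rmin_l d d1). pose proof (Rmin_r d d1).
    pose proof (Rmax_l M M1). pose proof (Rmax_r M M1).
    exists (Rmin d d1), (Rmax M M1). split; [auto|split; [lra|]].
    intros l. pattern l; apply Fin.caseS'.
    + apply (SOSH_with_mono _ _ _ d1 _ M1); auto; lra.
    + intros q. apply (SOSH_with_mono _ _ _ d _ M); auto; lra.
Qed.

Lemma inv_INR_succ_subseq phi k :
  increasing_index phi -> / (INR (phi k) + 1) <= / (INR k + 1).
Proof.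
  intros Hphi. pose proof (increasing_index_ge_id phi Hphi k) as hk. apply le_INR in hk.
  apply Rinv_le_contravar; pose proof (pos_INR k); lra.
Qed.

Lemma vconv_of_vnorm_le_inv n (u : nat -> Vec n) l :
  (forall k, vnorm (vsub (u k) l) <= / (INR k + 1)) -> vconv u l.
Proof.
  intros H e he. destruct (Un_cv_inv_INR_succ e he) as [N HN]. exists N. intros k hk.
  specialize (HN k hk). specialize (H k). unfold Rdist in HN. rewrite Rminus_0_r in HN.
  pose proof (Rle_abs (/ (INR k + 1))). lra.
Qed.

Section LinearRegularity.
Context {n m : nat}.
Variables (K : Fin.t m -> Vec n -> Prop) (xb : Vec n).
Hypothesis Hlr : lin_reg_inter K xb.

Lemma lin_reg_inter_no_vanishing_sums (y w : nat -> Fin.t m -> Vec n) :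
  (forall k l, K l (y k l) /\ vnorm (vsub (y k l) xb) <= / (INR k + 1) /\
               reg_normal (K l) (y k l) (w k l)) ->
  (forall k, fsum m (fun l => vnorm (w k l)) = 1) ->
  (forall k, vnorm (vsum (w k)) <= / (INR k + 1)) -> False.
Proof.
  intros Hyw Hone Hsum.
  destruct (bounded_vec_family_cv_subseq m n w 1) as [phi [Hphi [W HW]]].
  { intros k l. rewrite <- (Hone k). apply (fsum_term_le m (fun l => vnorm (w k l))).
    intros; apply vnorm_nonneg. }
  assert (HWn : forall l, lim_normal (K l) xb (W l)).
  { intros l. exists (fun k => y (phi k) l), (fun k => w (phi k) l).
    split; [intros k; apply Hyw|split; [intros k; apply Hyw|split; [|apply HW]]].
    apply vconv_of_vnorm_le_inv. intros k. eapply Rle_trans; [apply Hyw|].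
    apply inv_INR_succ_subseq; auto. }
  assert (HWsum : forall j, vsum W j = 0).
  { intros j. apply (UL_sequence (fun k => vsum (w (phi k)) j)).
    - apply (fsum_cv m (fun k l => w (phi k) l j)). intros l. apply (vconv_coord (fun k => w (phi k) l)), HW.
    - apply (vconv_coord (fun k => vsum (w (phi k))) (fun _ => 0)).
      apply vconv_of_vnorm_le_inv. intros k.
      rewrite (vnorm_ext _ (vsum (w (phi k)))) by (intros; unfold vsub; ring).
      eapply Rle_trans; [apply Hsum|]. apply inv_INR_succ_subseq; auto. }
  assert (HWone : fsum m (fun l => vnorm (W l)) = 1).
  { apply (UL_sequence (fun k => fsum m (fun l => vnorm (w (phi k) l)))).
    - apply (fsum_cv m (fun k l => vnorm (w (phi k) l))). intros l. apply vnorm_cv, HW.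
    - intros e he. exists 0%nat. intros k _. unfold Rdist. rewrite Hone, Rminus_diag, Rabs_R0. lra. }
  rewrite (fsum_ext m _ (fun _ => 0)), fsum_zero in HWone; [lra|].
  intros l. apply vnorm_of_zero. intros j. apply (Hlr W HWn HWsum).
Qed.

Lemma lin_reg_inter_uniform :
  exists r C, 0 < r /\ 0 < C /\ forall (y w : Fin.t m -> Vec n),
    (forall l, K l (y l) /\ vnorm (vsub (y l) xb) < r /\ reg_normal (K l) (y l) (w l)) ->
    fsum m (fun l => vnorm (w l)) <= C * vnorm (vsum w).
Proof.
  apply NNPP. intros Hn.
  assert (Hk : forall k : nat, exists yw : (Fin.t m -> Vec n) * (Fin.t m -> Vec n),
    (forall l, K l (fst yw l) /\ vnorm (vsub (fst yw l) xb) < / (INR k + 1) /\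
               reg_normal (K l) (fst yw l) (snd yw l)) /\
    (INR k + 1) * vnorm (vsum (snd yw)) < fsum m (fun l => vnorm (snd yw l))).
  { intros k. apply NNPP; intros Hk. apply Hn. exists (/ (INR k + 1)), (INR k + 1).
    assert (0 < INR k + 1) by (pose proof (pos_INR k); lra).
    split; [apply Rinv_0_lt_compat; lra|split; [lra|]].
    intros y w Hyw. apply Rnot_lt_le. intros hg. apply Hk. exists (y, w). auto. }
  destruct (choice _ Hk) as [yw Hyw].
  set (S := fun k => fsum m (fun l => vnorm (snd (yw k) l))).
  assert (HSpos : forall k, 0 < S k).
  { intros k. destruct (Hyw k) as [_ h]. pose proof (vnorm_nonneg (vsum (snd (yw k)))).
    pose proof (pos_INR k). unfold S. nra. }
  assert (HS : forall k, 0 <= / S k) by (intros k; left; apply Rinv_0_lt_compat; auto).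
  apply (lin_reg_inter_no_vanishing_sums (fun k => fst (yw k)) (fun k l i => / S k * snd (yw k) l i)).
  - intros k l. destruct (Hyw k) as [H _]. destruct (H l) as [h1 [h2 h3]].
    split; [auto|split; [lra|apply reg_normal_scal; auto]].
  - intros k. rewrite (fsum_ext m _ (fun l => / S k * vnorm (snd (yw k) l))).
    + rewrite fsum_mult_l. change (/ S k * S k = 1). apply Rinv_l. specialize (HSpos k). lra.
    + intros l. rewrite vnorm_scal, Rabs_pos_eq; auto.
  - intros k. destruct (Hyw k) as [_ h]. fold (S k) in h. specialize (HSpos k).
    rewrite (vnorm_ext _ (fun i => / S k * vsum (snd (yw k)) i))
      by (intros i; unfold vsum; apply fsum_mult_l).
    rewrite vnorm_scal, Rabs_pos_eq by auto.
    apply (Rmult_le_reg_l (S k * (INR k + 1))); [pose proof (pos_INR k); nra|].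
    replace (S k * (INR k + 1) * (/ S k * vnorm (vsum (snd (yw k)))))
      with ((INR k + 1) * vnorm (vsum (snd (yw k)))) by (field; lra).
    replace (S k * (INR k + 1) * / (INR k + 1)) with (S k) by (field; pose proof (pos_INR k); lra).
    lra.
Qed.

End LinearRegularity.

(** * The fuzzy intersection rule *)

Definition pack {n m} (z : Vec n) (y : Fin.t m -> Vec n) : Fin.t (S m) -> Vec n :=
  fun j => Fin.caseS' j (fun _ => Vec n) z y.

Definition replace_at {n m} (y : Fin.t m -> Vec n) l (y' : Vec n) : Fin.t m -> Vec n :=
  fun l' => if Fin.eq_dec l l' then y' else y l'.

(* A family p : Fin.t (S m) -> Vec n encodes a centre z = p F1 and points y l = p (FS l);
   the penalty keeps z close to a and, for large weight N, the y l close to z. *)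
Definition penalty {n m} (a : Vec n) (N : R) (p : Fin.t (S m) -> Vec n) : R :=
  vinner (vsub (p Fin.F1) a) (vsub (p Fin.F1) a)
  + N * fsum m (fun l => vinner (vsub (p (Fin.FS l)) (p Fin.F1)) (vsub (p (Fin.FS l)) (p Fin.F1))).

Definition penalty_domain {n m} (K : Fin.t m -> Vec n -> Prop) (x : Vec n) (rho : R)
    (p : Fin.t (S m) -> Vec n) : Prop :=
  vnorm (vsub (p Fin.F1) x) <= rho /\
  forall l, K l (p (Fin.FS l)) /\ vnorm (vsub (p (Fin.FS l)) x) <= rho.

Definition penalty_min {n m} (K : Fin.t m -> Vec n -> Prop) x rho a N p : Prop :=
  penalty_domain K x rho p /\ forall q, penalty_domain K x rho q -> penalty a N p <= penalty a N q.

Section Penalty.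
Context {n m : nat}.
Variables (K : Fin.t m -> Vec n -> Prop) (x : Vec n) (rho : R).
Implicit Types (a : Vec n) (p : Fin.t (S m) -> Vec n).

Lemma penalty_weight_le a N N' p : N <= N' -> penalty a N p <= penalty a N' p.
Proof.
  intros h. unfold penalty.
  pose proof (fsum_nonneg m _ (fun l => vinner_self_nonneg (vsub (p (Fin.FS l)) (p Fin.F1)))). nra.
Qed.

Lemma penalty_head_le a N p : 0 <= N ->
  vinner (vsub (p Fin.F1) a) (vsub (p Fin.F1) a) <= penalty a N p.
Proof.
  intros h. unfold penalty.
  pose proof (fsum_nonneg m _ (fun l => vinner_self_nonneg (vsub (p (Fin.FS l)) (p Fin.F1)))). nra.
Qed.

Lemma penalty_nonneg a N p : 0 <= N -> 0 <= penalty a N p.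
Proof.
  intros h. apply (Rle_trans _ _ _ (vinner_self_nonneg (vsub (p Fin.F1) a))), penalty_head_le; auto.
Qed.

Lemma penalty_tail_le a N p l : 0 <= N ->
  N * vinner (vsub (p (Fin.FS l)) (p Fin.F1)) (vsub (p (Fin.FS l)) (p Fin.F1)) <= penalty a N p.
Proof.
  intros h. unfold penalty. pose proof (vinner_self_nonneg (vsub (p Fin.F1) a)).
  pose proof (fsum_term_le m _ (fun l => vinner_self_nonneg (vsub (p (Fin.FS l)) (p Fin.F1))) l).
  cbv beta in *. nra.
Qed.

Lemma penalty_center (x0 v : Vec n) t N :
  penalty (fun i => x0 i + t * v i) N (pack x0 (fun _ : Fin.t m => x0)) = t * t * vinner v v.
Proof.
  unfold penalty; cbn.
  rewrite (fsum_ext m _ (fun _ => 0)) by (intros; apply vinner_zero_l; intros; unfold vsub; ring).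
  rewrite fsum_zero.
  rewrite (vinner_ext (vsub x0 (fun i => x0 i + t * v i)) (fun i => (- t) * v i)
             (vsub x0 (fun i => x0 i + t * v i)) (fun i => (- t) * v i)) by (intros; unfold vsub; ring).
  rewrite vinner_scal_l, vinner_scal_r. ring.
Qed.

Lemma penalty_cv a N (u : nat -> Fin.t (S m) -> Vec n) P :
  (forall j, vconv (fun k => u k j) (P j)) -> Un_cv (fun k => penalty a N (u k)) (penalty a N P).
Proof.
  intros HP. apply CV_plus.
  - apply vinner_cv; apply vconv_vsub_const, HP.
  - apply CV_mult; [apply Un_cv_const|].
    apply (fsum_cv m (fun k l => vinner (vsub (u k (Fin.FS l)) (u k Fin.F1))
                                        (vsub (u k (Fin.FS l)) (u k Fin.F1)))).
    intros l. apply vinner_cv; apply vconv_vsub; apply HP.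
Qed.

Lemma penalty_domain_center : 0 <= rho -> inter_sets K x -> penalty_domain K x rho (pack x (fun _ => x)).
Proof.
  intros hr Hx. assert (vnorm (vsub x x) = 0) by (apply vnorm_of_zero; intros; unfold vsub; ring).
  split; [simpl; lra|]. intros l; simpl. split; [auto|lra].
Qed.

Lemma penalty_domain_bounded p : penalty_domain K x rho p -> forall j, vnorm (p j) <= vnorm x + rho.
Proof.
  intros [H1 H2] j. pattern j; apply Fin.caseS'.
  - pose proof (vnorm_le_vsub (p Fin.F1) x). lra.
  - intros l. destruct (H2 l) as [_ h]. pose proof (vnorm_le_vsub (p (Fin.FS l)) x). lra.
Qed.

Lemma penalty_domain_closed (u : nat -> Fin.t (S m) -> Vec n) P :
  (forall l, closed_setV (K l)) -> (forall k, penalty_domain K x rho (u k)) ->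
  (forall j, vconv (fun k => u k j) (P j)) -> penalty_domain K x rho P.
Proof.
  intros HK Hu HP.
  assert (Hball : forall j, (forall k, vnorm (vsub (u k j) x) <= rho) -> vnorm (vsub (P j) x) <= rho).
  { intros j Hj. apply (Un_cv_le (fun k => vnorm (vsub (u k j) x)) (fun _ => rho)).
    - apply vnorm_cv, vconv_vsub_const, HP.
    - apply Un_cv_const.
    - exists 0%nat; auto. }
  split; [apply Hball; intros; apply Hu|].
  intros l. split; [|apply Hball; intros; apply Hu].
  apply (closed_setV_cv (K l) (fun k => u k (Fin.FS l))); [apply HK|intros; apply Hu|apply HP].
Qed.

Lemma penalty_min_exists a N : 0 < rho -> 0 <= N ->
  (forall l, closed_setV (K l)) -> inter_sets K x -> exists p, penalty_min K x rho a N p.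
Proof.
  intros hr hN HK Hx.
  apply (closed_bounded_attains_min (S m) n (penalty_domain K x rho) (penalty a N) (vnorm x + rho)).
  - exists (pack x (fun _ => x)). apply penalty_domain_center; auto; lra.
  - apply penalty_domain_bounded.
  - intros u P Hu HP. split; [apply (penalty_domain_closed u); auto|apply penalty_cv; auto].
  - intros; apply penalty_nonneg; auto.
Qed.

Lemma penalty_replace_at a N z (y : Fin.t m -> Vec n) l y' :
  penalty a N (pack z (replace_at y l y')) - penalty a N (pack z y)
  = N * (vinner (vsub y' z) (vsub y' z) - vinner (vsub (y l) z) (vsub (y l) z)).
Proof.
  unfold penalty; cbn.
  assert (Hl : replace_at y l y' l = y')
    by (unfold replace_at; destruct (Fin.eq_dec l l); congruence).
  pose proof (fsum_change_one m (fun l' => vinner (vsub (y l') z) (vsub (y l') z))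
                (fun l' => vinner (vsub (replace_at y l y' l') z) (vsub (replace_at y l y' l') z)) l) as H.
  cbv beta in H. rewrite Hl in H. rewrite <- H; [ring|].
  intros l' hl'. unfold replace_at. destruct (Fin.eq_dec l l'); congruence.
Qed.

Lemma penalty_shift_head a N z (y : Fin.t m -> Vec n) d :
  penalty a N (pack (fun i => z i + d i) y)
  = penalty a N (pack z y)
    + 2 * vinner (fun i => 1 * vsub z a i + N * vsum (fun l => vsub z (y l)) i) d
    + (1 + N * INR m) * vinner d d.
Proof.
  unfold penalty; cbn.
  rewrite vinner_lin, vinner_vsum.
  rewrite (vinner_ext (vsub (fun i => z i + d i) a) (fun i => vsub z a i + 1 * d i)
             (vsub (fun i => z i + d i) a) (fun i => vsub z a i + 1 * d i))
    by (intros; unfold vsub; ring).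
  rewrite vinner_expand.
  rewrite (fsum_ext m (fun l => vinner (vsub (y l) (fun i => z i + d i)) (vsub (y l) (fun i => z i + d i)))
             (fun l => vinner (vsub (y l) z) (vsub (y l) z) + (-2) * vinner (vsub z (y l)) d * (-1)
                       + vinner d d * 1)).
  - rewrite !fsum_plus, fsum_mult_r, fsum_mult_l, fsum_const. ring.
  - intros l.
    rewrite (vinner_ext (vsub (y l) (fun i => z i + d i)) (fun i => vsub (y l) z i + (-1) * d i)
               (vsub (y l) (fun i => z i + d i)) (fun i => vsub (y l) z i + (-1) * d i))
      by (intros; unfold vsub; ring).
    rewrite vinner_expand.
    rewrite (vinner_ext (vsub z (y l)) (fun i => (-1) * vsub (y l) z i) d d)
      by (intros; unfold vsub; ring).
    rewrite vinner_scal_l. ring.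
Qed.

Lemma penalty_min_tail_reg_normal a N p l : 0 < rho -> 0 < N ->
  penalty_min K x rho a N p -> vnorm (vsub (p (Fin.FS l)) x) <= rho / 2 ->
  reg_normal (K l) (p (Fin.FS l)) (vsub (p Fin.F1) (p (Fin.FS l))).
Proof.
  intros hr hN [HD Hmin] Hyl.
  set (z := p Fin.F1). set (y := fun l => p (Fin.FS l)). change (p (Fin.FS l)) with (y l) in *.
  apply (reg_normal_of_quadratic_bound (K l) (y l) _ (rho / 2) (/ 2)); [lra|lra|].
  intros y' hy' hd.
  assert (Hq : penalty_domain K x rho (pack z (replace_at y l y'))).
  { split; [apply HD|]. intros l'. cbn. unfold replace_at. destruct (Fin.eq_dec l l') as [<-|_].
    - split; auto. pose proof (vnorm_vsub_triang y' (y l) x). lra.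
    - apply HD. }
  pose proof (Hmin _ Hq) as Hle. pose proof (penalty_replace_at a N z y l y') as Hrep.
  change (penalty a N p) with (penalty a N (pack z y)) in Hle.
  assert (Hcmp : vinner (vsub (y l) z) (vsub (y l) z) <= vinner (vsub y' z) (vsub y' z)).
  { apply (Rmult_le_reg_l N); auto. lra. }
  rewrite (vinner_ext (vsub y' z) (fun i => vsub (y l) z i + 1 * vsub y' (y l) i)
             (vsub y' z) (fun i => vsub (y l) z i + 1 * vsub y' (y l) i)) in Hcmp
    by (intros; unfold vsub; ring).
  rewrite vinner_expand in Hcmp.
  rewrite (vinner_ext (vsub z (y l)) (fun i => (-1) * vsub (y l) z i) (vsub y' (y l)) (vsub y' (y l)))
    by (intros; unfold vsub; ring).
  rewrite vinner_scal_l, vnorm_pow2. lra.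
Qed.

Lemma penalty_min_head_stationary a N p : 0 < rho -> 0 < N ->
  penalty_min K x rho a N p -> vnorm (vsub (p Fin.F1) x) <= rho / 2 ->
  forall i, (p Fin.F1 i - a i) + N * fsum m (fun l => p Fin.F1 i - p (Fin.FS l) i) = 0.
Proof.
  intros hr hN [HD Hmin] Hz.
  set (z := p Fin.F1) in *. set (y := fun l => p (Fin.FS l)).
  set (g := fun i => 1 * vsub z a i + N * vsum (fun l => vsub z (y l)) i).
  assert (Hg : forall i, g i = 0).
  2:{ intros i. specialize (Hg i). unfold g, vsum, vsub, y in Hg. lra. }
  apply vinner_self_eq0.
  set (c := 1 + N * INR m). assert (hc : 1 <= c) by (pose proof (pos_INR m); unfold c; nra).
  set (G := vinner g g). assert (hG : 0 <= G) by apply vinner_self_nonneg.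
  pose proof (vnorm_nonneg g) as hng.
  (* move the centre against g by a step s small enough to stay in the domain *)
  set (s := Rmin (/ c) (rho / (2 * (vnorm g + 1)))).
  assert (hs : 0 < s) by (apply Rmin_pos; [apply Rinv_0_lt_compat|apply Rdiv_lt_0_compat]; lra).
  assert (hsc : s * c <= 1).
  { pose proof (Rmin_l (/ c) (rho / (2 * (vnorm g + 1)))). fold s in H.
    apply Rmult_le_compat_r with (r := c) in H; [|lra]. rewrite Rinv_l in H; lra. }
  assert (hsg : s * vnorm g <= rho / 2).
  { pose proof (Rmin_r (/ c) (rho / (2 * (vnorm g + 1)))). fold s in H.
    apply Rmult_le_compat_r with (r := vnorm g + 1) in H; [|lra].
    replace (rho / (2 * (vnorm g + 1)) * (vnorm g + 1)) with (rho / 2) in H by (field; lra). nra. }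
  set (d := fun i => (- s) * g i).
  assert (Hq : penalty_domain K x rho (pack (fun i => z i + d i) y)).
  { split; [|intros l; apply HD]. cbn.
    rewrite (vnorm_ext (vsub (fun i => z i + d i) x) (fun i => vsub z x i + d i))
      by (intros; unfold vsub; ring).
    eapply Rle_trans; [apply vnorm_triang|]. unfold d. rewrite vnorm_scal, Rabs_Ropp, Rabs_pos_eq; lra. }
  pose proof (Hmin _ Hq) as Hle. rewrite penalty_shift_head in Hle. fold g c in Hle.
  change (penalty a N p) with (penalty a N (pack z y)) in Hle.
  unfold d in Hle. rewrite vinner_scal_r, vinner_scal_l, vinner_scal_r in Hle. fold G in Hle.
  assert (0 <= s * G * (s * c - 2)) by nra.
  assert (0 <= s * G) by (apply Rmult_le_pos; lra).
  assert (s * G * (s * c - 1) <= s * G * 0) by (apply Rmult_le_compat_l; lra).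
  assert (s * G = 0) by lra. nra.
Qed.

Lemma penalty_min_tail_near v t N p l s : 0 <= rho -> 0 < N -> inter_sets K x ->
  penalty_min K x rho (fun i => x i + t * v i) N p -> t * t * vinner v v <= N * (s * s) -> 0 <= s ->
  vnorm (vsub (p (Fin.FS l)) (p Fin.F1)) <= s.
Proof.
  intros hr hN Hx [_ Hmin] HT hs. apply vnorm_le_of_vinner; [auto|].
  assert (Hpen : penalty (fun i => x i + t * v i) N p <= t * t * vinner v v).
  { rewrite <- (penalty_center x v t N). apply Hmin, penalty_domain_center; auto. }
  pose proof (penalty_tail_le (fun i => x i + t * v i) N p l ltac:(lra)).
  apply (Rmult_le_reg_l N); lra.
Qed.

Lemma penalty_min_normal_sum v t N p : 0 < rho -> 0 < N -> 0 < t ->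
  penalty_min K x rho (fun i => x i + t * v i) N p -> vnorm (vsub (p Fin.F1) x) <= rho / 2 ->
  vnorm (vsub v (vsum (fun l i => N / t * vsub (p Fin.F1) (p (Fin.FS l)) i)))
  = / t * vnorm (vsub (p Fin.F1) x).
Proof.
  intros hr hN ht Hp Hz.
  pose proof (penalty_min_head_stationary _ N p hr hN Hp Hz) as Hstat. cbv beta in Hstat.
  rewrite <- (Rabs_pos_eq (/ t)) by (left; apply Rinv_0_lt_compat; auto).
  rewrite <- vnorm_scal. apply vnorm_ext. intros i. specialize (Hstat i). unfold vsub, vsum.
  rewrite (fsum_ext m _ (fun l => / t * (N * (p Fin.F1 i - p (Fin.FS l) i)))) by (intros; field; lra).
  rewrite !fsum_mult_l.
  replace (N * fsum m (fun l => p Fin.F1 i - p (Fin.FS l) i)) with (x i + t * v i - p Fin.F1 i) by lra.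
  field. lra.
Qed.

End Penalty.

Lemma vnorm_vsub_le_of_closer n (x z v : Vec n) t e : 0 < t -> 0 < e ->
  vinner v (vsub z x) <= e / 4 * vnorm (vsub z x) ->
  vinner (vsub z (fun i => x i + t * v i)) (vsub z (fun i => x i + t * v i)) <= t * t * vinner v v ->
  vnorm (vsub z x) <= t * e / 2.
Proof.
  intros ht he Hv Hz.
  rewrite (vinner_ext (vsub z (fun i => x i + t * v i)) (fun i => vsub z x i + (- t) * v i)
             (vsub z (fun i => x i + t * v i)) (fun i => vsub z x i + (- t) * v i)) in Hz
    by (intros; unfold vsub; ring).
  rewrite vinner_expand, (vinner_sym (vsub z x) v), <- (vnorm_mult_self (vsub z x)) in Hz.
  pose proof (vnorm_nonneg (vsub z x)) as hd. set (d := vnorm (vsub z x)) in *.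
  assert (d * d <= t * e / 2 * d) by nra.
  destruct (Rle_or_lt d (t * e / 2)) as [hh|hh]; [auto|].
  assert (0 < t * e) by (apply Rmult_lt_0_compat; lra).
  apply Rmult_lt_compat_r with (r := d) in hh; lra.
Qed.

Section PenaltyLimits.
Context {n m : nat}.
Variables (K : Fin.t m -> Vec n -> Prop) (x : Vec n) (rho : R).
Hypothesis HK : forall l, closed_setV (K l).

Lemma penalty_limit_in_inter (q : nat -> Fin.t (S m) -> Vec n) P a T :
  (forall k, penalty_domain K x rho (q k)) ->
  (forall k, penalty a (INR k + 1) (q k) <= T) ->
  (forall j, vconv (fun k => q k j) (P j)) ->
  penalty_domain K x rho P /\ inter_sets K (P Fin.F1) /\
  vinner (vsub (P Fin.F1) a) (vsub (P Fin.F1) a) <= T.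
Proof.
  intros HD Hpen HP.
  assert (HDP : penalty_domain K x rho P) by (apply (penalty_domain_closed K x rho q); auto).
  split; [auto|split].
  - intros l.
    (* the weights k + 1 force the tails onto the head in the limit *)
    assert (Hsq : vinner (vsub (P (Fin.FS l)) (P Fin.F1)) (vsub (P (Fin.FS l)) (P Fin.F1)) <= 0).
    { rewrite <- (Rmult_0_r T).
      apply (Un_cv_le (fun k => vinner (vsub (q k (Fin.FS l)) (q k Fin.F1))
                                       (vsub (q k (Fin.FS l)) (q k Fin.F1)))
                      (fun k => T * / (INR k + 1))).
      - apply vinner_cv; apply vconv_vsub; apply HP.
      - apply CV_mult; [apply Un_cv_const|apply Un_cv_inv_INR_succ].
      - exists 0%nat. intros k _. pose proof (pos_INR k).
        pose proof (penalty_tail_le a (INR k + 1) (q k) l ltac:(lra)). specialize (Hpen k).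
        apply (Rmult_le_reg_l (INR k + 1)); [lra|].
        replace ((INR k + 1) * (T * / (INR k + 1))) with T by (field; lra). lra. }
    apply (HK l). intros e he. exists (P (Fin.FS l)). split; [apply HDP|].
    rewrite vnorm_vsub_sym, (vnorm_of_zero (vsub (P (Fin.FS l)) (P Fin.F1))); [auto|].
    apply vinner_self_eq0. pose proof (vinner_self_nonneg (vsub (P (Fin.FS l)) (P Fin.F1))). lra.
  - apply (Un_cv_le (fun k => vinner (vsub (q k Fin.F1) a) (vsub (q k Fin.F1) a)) (fun _ => T)).
    + apply vinner_cv; apply vconv_vsub_const, HP.
    + apply Un_cv_const.
    + exists 0%nat. intros k _. eapply Rle_trans; [|apply (Hpen k)].
      apply penalty_head_le. pose proof (pos_INR k). lra.
Qed.

Lemma penalty_min_center_near v dl t e (pN : nat -> Fin.t (S m) -> Vec n) :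
  inter_sets K x -> 0 < rho < dl -> 0 < t -> 0 < e ->
  (forall z, inter_sets K z -> vnorm (vsub z x) < dl -> vinner v (vsub z x) <= e / 4 * vnorm (vsub z x)) ->
  (forall N, penalty_min K x rho (fun i => x i + t * v i) (INR N + 1) (pN N)) ->
  forall N0, exists N, (N0 <= N)%nat /\ vnorm (vsub (pN N Fin.F1) x) <= t * e.
Proof.
  intros Hx hr ht he Hv HpN N0. apply NNPP. intros Hn.
  (* otherwise a limit of centres is a point of the intersection at distance >= t e from x, yet
     closer to x + t v than x is, which the regular-normal inequality forbids *)
  set (a := fun i => x i + t * v i).
  assert (Hfar : forall k, t * e < vnorm (vsub (pN (N0 + k)%nat Fin.F1) x)).
  { intros k. apply Rnot_le_lt. intros hle. apply Hn. exists (N0 + k)%nat. split; [lia|auto]. }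
  assert (Hpen : forall N, penalty a (INR N + 1) (pN N) <= t * t * vinner v v).
  { intros N. rewrite <- (@penalty_center n m x v t (INR N + 1)). apply HpN.
    apply penalty_domain_center; auto; lra. }
  destruct (bounded_vec_family_cv_subseq (S m) n (fun k => pN (N0 + k)%nat) (vnorm x + rho))
    as [phi [Hphi [P HP]]].
  { intros k j. apply (penalty_domain_bounded K x rho). apply HpN. }
  destruct (penalty_limit_in_inter (fun k => pN (N0 + phi k)%nat) P a (t * t * vinner v v))
    as [HDP [HzK Hza]]; [intros; apply HpN| |auto|].
  { intros k. eapply Rle_trans; [|apply Hpen]. apply penalty_weight_le.
    pose proof (increasing_index_ge_id phi Hphi k) as hk.
    assert (INR k <= INR (N0 + phi k)) by (apply le_INR; lia). lra. }
  assert (Hzx : t * e <= vnorm (vsub (P Fin.F1) x)).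
  { apply (Un_cv_le (fun _ => t * e) (fun k => vnorm (vsub (pN (N0 + phi k)%nat Fin.F1) x))).
    - apply Un_cv_const.
    - apply vnorm_cv, vconv_vsub_const, HP.
    - exists 0%nat; intros; left; apply Hfar. }
  pose proof (vnorm_vsub_le_of_closer n x (P Fin.F1) v t e ht he) as Hclose.
  destruct HDP as [hz _].
  assert (0 < t * e) by (apply Rmult_lt_0_compat; lra).
  assert (vnorm (vsub (P Fin.F1) x) <= t * e / 2) by (apply Hclose; auto; apply Hv; auto; lra).
  lra.
Qed.

End PenaltyLimits.

Lemma fuzzy_intersection_rule n m (K : Fin.t m -> Vec n -> Prop) x v eps eta :
  (forall l, closed_setV (K l)) -> inter_sets K x -> reg_normal (inter_sets K) x v ->
  0 < eps -> 0 < eta ->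
  exists y w : Fin.t m -> Vec n,
    (forall l, K l (y l) /\ vnorm (vsub (y l) x) <= eta /\ reg_normal (K l) (y l) (w l)) /\
    vnorm (vsub v (vsum w)) <= eps.
Proof.
  intros HK Hx Hv he heta.
  destruct (Hv (eps / 4)) as [dl [hdl Hdl]]; [lra|].
  set (rho := Rmin dl eta / 2).
  assert (hrho : 0 < rho < dl /\ rho <= eta / 2).
  { pose proof (Rmin_l dl eta). pose proof (Rmin_r dl eta). pose proof (Rmin_pos dl eta hdl heta).
    unfold rho; lra. }
  set (t := rho / (4 * (eps + 1))).
  assert (ht : 0 < t) by (apply Rdiv_lt_0_compat; lra).
  assert (hte : t * eps <= rho / 4).
  { unfold t. replace (rho / (4 * (eps + 1)) * eps) with (rho / 4 * (eps / (eps + 1))) by (field; lra).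
    assert (eps / (eps + 1) <= 1) by (apply (Rmult_le_reg_r (eps + 1)); [lra|field_simplify; lra]).
    nra. }
  set (a := fun i => x i + t * v i).
  set (T := t * t * vinner v v).
  destruct (choice (fun (N : nat) p => penalty_min K x rho a (INR N + 1) p)
              (fun N : nat => penalty_min_exists K x rho a (INR N + 1)
                                ltac:(lra) ltac:(pose proof (pos_INR N); lra) HK Hx)) as [pN HpN].
  destruct (INR_unbounded (T / (rho / 4 * (rho / 4)))) as [N0 HN0].
  destruct (penalty_min_center_near K x rho HK v dl t eps pN Hx ltac:(lra) ht he
              Hdl HpN N0) as [N [HN HNz]].
  set (Nw := INR N + 1). set (p := pN N).
  assert (hNw : 0 < Nw) by (unfold Nw; pose proof (pos_INR N); lra).
  assert (HT : T <= Nw * (rho / 4 * (rho / 4))).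
  { apply le_INR in HN. assert (0 < rho / 4 * (rho / 4)) by nra.
    apply (Rmult_le_reg_r (/ (rho / 4 * (rho / 4)))); [apply Rinv_0_lt_compat; lra|].
    replace (Nw * (rho / 4 * (rho / 4)) * / (rho / 4 * (rho / 4))) with Nw by (field; lra).
    unfold Nw. unfold Rdiv in HN0. lra. }
  assert (Hyx : forall l, vnorm (vsub (p (Fin.FS l)) x) <= rho / 2).
  { intros l. pose proof (vnorm_vsub_triang (p (Fin.FS l)) (p Fin.F1) x).
    pose proof (penalty_min_tail_near K x rho v t Nw p l (rho / 4) ltac:(lra) hNw Hx (HpN N) HT ltac:(lra)).
    unfold p in *. lra. }
  exists (fun l => p (Fin.FS l)), (fun l i => (Nw / t) * vsub (p Fin.F1) (p (Fin.FS l)) i). split.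
  - intros l. split; [apply (HpN N)|split; [specialize (Hyx l); lra|]].
    apply reg_normal_scal; [apply Rlt_le, Rdiv_lt_0_compat; auto|].
    apply (penalty_min_tail_reg_normal K x rho a Nw p l); [lra|auto|apply HpN|apply Hyx].
  - rewrite (penalty_min_normal_sum K x rho v t Nw p); [|lra|auto|auto|apply HpN|unfold p; lra].
    apply (Rmult_le_reg_l t); [auto|]. rewrite <- Rmult_assoc, Rinv_r by lra. unfold p. lra.
Qed.

(** * The SOSH estimate for the intersection *)

Lemma Rle_of_le_plus_eps A B Q e0 : 0 < e0 -> 0 <= Q ->
  (forall e, 0 < e -> e <= e0 -> A <= B + e * Q) -> A <= B.
Proof.
  intros he0 hQ H. apply Rnot_lt_le. intros hlt.
  set (e := Rmin e0 ((A - B) / (2 * (Q + 1)))).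
  assert (he : 0 < e) by (apply Rmin_pos; auto; apply Rdiv_lt_0_compat; lra).
  specialize (H e he (Rmin_l _ _)). pose proof (Rmin_r e0 ((A - B) / (2 * (Q + 1)))) as hr. fold e in hr.
  apply (Rmult_le_compat_r (2 * (Q + 1))) in hr; [|lra].
  replace ((A - B) / (2 * (Q + 1)) * (2 * (Q + 1))) with (A - B) in hr by (field; lra). nra.
Qed.

Lemma vinner_split_vsum n m (v x xb : Vec n) (y w : Fin.t m -> Vec n) :
  vinner v (vsub x xb)
  = vinner (vsub v (vsum w)) (vsub x xb) + fsum m (fun l => vinner (w l) (vsub x (y l)))
    + fsum m (fun l => vinner (w l) (vsub (y l) xb)).
Proof.
  rewrite Rplus_assoc, <- fsum_plus.
  rewrite (fsum_ext m _ (fun l => 1 * vinner (w l) (vsub x xb))).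
  - rewrite fsum_mult_l, <- vinner_vsum, <- (Rmult_1_l (vinner (vsub v (vsum w)) (vsub x xb))).
    rewrite <- vinner_lin. apply vinner_ext; intros; unfold vsub; ring.
  - intros l. unfold vinner. rewrite <- fsum_plus, <- fsum_mult_l.
    apply fsum_ext; intros; unfold vsub; ring.
Qed.

Section RegularEstimate.
Context {n m : nat}.
Variables (K : Fin.t m -> Vec n -> Prop) (xb : Vec n) (r C ds Ms : R).
Hypotheses (HK : forall l, closed_setV (K l)) (hC : 0 < C) (hMs : 0 < Ms).
Hypothesis HA : forall (y w : Fin.t m -> Vec n),
  (forall l, K l (y l) /\ vnorm (vsub (y l) xb) < r /\ reg_normal (K l) (y l) (w l)) ->
  fsum m (fun l => vnorm (w l)) <= C * vnorm (vsum w).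
Hypothesis HS : forall l, SOSH_with (K l) xb ds Ms.

Lemma reg_normal_inter_estimate_eps x v e : inter_sets K x -> reg_normal (inter_sets K) x v ->
  0 < e -> vnorm (vsub x xb) + e < Rmin r ds ->
  vinner v (vsub x xb)
  <= e * vnorm (vsub x xb) + C * (vnorm v + e) * e
     + C * (vnorm v + e) * (Ms * ((vnorm (vsub x xb) + e) * (vnorm (vsub x xb) + e))).
Proof.
  intros Hx Hv he Hde. pose proof (Rmin_l r ds). pose proof (Rmin_r r ds).
  set (d := vnorm (vsub x xb)) in *. pose proof (vnorm_nonneg (vsub x xb)) as hd. fold d in hd.
  destruct (fuzzy_intersection_rule n m K x v e e HK Hx Hv he he) as [y [w [Hyw Hvw]]].
  assert (Hyb : forall l, vnorm (vsub (y l) xb) <= d + e).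
  { intros l. pose proof (vnorm_vsub_triang (y l) x xb) as Ht. fold d in Ht.
    destruct (Hyw l) as [_ [h _]]. lra. }
  set (S := fsum m (fun l => vnorm (w l))).
  assert (hS : 0 <= S) by (apply fsum_nonneg; intros; apply vnorm_nonneg).
  assert (HSw : S <= C * (vnorm v + e)).
  { eapply Rle_trans.
    - apply (HA y w). intros l. destruct (Hyw l) as [h1 [h2 h3]]. specialize (Hyb l).
      split; [auto|split; [lra|auto]].
    - apply Rmult_le_compat_l; [lra|].
      pose proof (vnorm_le_vsub (vsum w) v). rewrite vnorm_vsub_sym in H1. lra. }
  rewrite (vinner_split_vsum n m v x xb y w).
  assert (T1 : vinner (vsub v (vsum w)) (vsub x xb) <= e * d).
  { eapply Rle_trans; [apply vinner_le_vnorm|]. apply Rmult_le_compat_r; auto. }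
  assert (T2 : fsum m (fun l => vinner (w l) (vsub x (y l))) <= S * e).
  { unfold S. rewrite <- fsum_mult_r. apply fsum_le. intros l.
    eapply Rle_trans; [apply vinner_le_vnorm|].
    apply Rmult_le_compat_l; [apply vnorm_nonneg|]. rewrite vnorm_vsub_sym. apply Hyw. }
  assert (T3 : fsum m (fun l => vinner (w l) (vsub (y l) xb)) <= S * (Ms * ((d + e) * (d + e)))).
  { unfold S. rewrite <- fsum_mult_r. apply fsum_le. intros l. destruct (Hyw l) as [h1 [_ h3]].
    specialize (Hyb l). pose proof (vnorm_nonneg (vsub (y l) xb)). pose proof (vnorm_nonneg (w l)).
    eapply Rle_trans; [apply (SOSH_with_reg_normal (K l) xb ds Ms (y l) (w l)); auto; lra|].
    assert (hq : vnorm (vsub (y l) xb) ^ 2 <= (d + e) * (d + e))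
      by (simpl; rewrite Rmult_1_r; apply Rmult_le_compat; lra).
    apply (Rmult_le_compat_l (Ms * vnorm (w l))) in hq; [lra|]. apply Rmult_le_pos; lra. }
  assert (S * e <= C * (vnorm v + e) * e) by (apply Rmult_le_compat_r; lra).
  assert (S * (Ms * ((d + e) * (d + e))) <= C * (vnorm v + e) * (Ms * ((d + e) * (d + e))))
    by (apply Rmult_le_compat_r; [apply Rmult_le_pos; nra|lra]).
  lra.
Qed.

Lemma reg_normal_inter_estimate x v : inter_sets K x -> reg_normal (inter_sets K) x v ->
  vnorm (vsub x xb) < Rmin r ds ->
  vinner v (vsub x xb) <= C * Ms * vnorm v * (vnorm (vsub x xb) * vnorm (vsub x xb)).
Proof.
  intros Hx Hv Hd.
  set (d := vnorm (vsub x xb)) in *. pose proof (vnorm_nonneg (vsub x xb)) as hd. fold d in hd.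
  set (nv := vnorm v). pose proof (vnorm_nonneg v) as hv. fold nv in hv.
  apply (Rle_of_le_plus_eps _ _ (d + C * (nv + 1) + C * Ms * (nv * (2 * d + 1) + (d + 1) * (d + 1)))
           (Rmin 1 ((Rmin r ds - d) / 2))).
  { apply Rmin_pos; lra. }
  { assert (0 <= C * (nv + 1)) by (apply Rmult_le_pos; lra).
    assert (0 <= C * Ms * (nv * (2 * d + 1) + (d + 1) * (d + 1)))
      by (apply Rmult_le_pos; [apply Rmult_le_pos|nra]; lra).
    lra. }
  intros e he hee. pose proof (Rmin_l 1 ((Rmin r ds - d) / 2)). pose proof (Rmin_r 1 ((Rmin r ds - d) / 2)).
  eapply Rle_trans; [apply (reg_normal_inter_estimate_eps x v e); auto; fold d; lra|]. fold d nv.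
  assert (A1 : C * (nv + e) * e <= e * (C * (nv + 1))).
  { rewrite (Rmult_comm (C * (nv + e)) e). apply Rmult_le_compat_l; [lra|].
    apply Rmult_le_compat_l; lra. }
  assert (A2 : (nv + e) * ((d + e) * (d + e)) <= nv * (d * d) + e * (nv * (2 * d + 1) + (d + 1) * (d + 1))).
  { assert (e * e <= e) by nra. assert ((d + e) * (d + e) <= (d + 1) * (d + 1)) by nra.
    replace ((nv + e) * ((d + e) * (d + e)))
      with (nv * (d * d) + nv * (2 * d * e + e * e) + e * ((d + e) * (d + e))) by ring.
    assert (nv * (2 * d * e + e * e) <= nv * (e * (2 * d + 1))) by nra. nra. }
  assert (A3 : C * (nv + e) * (Ms * ((d + e) * (d + e)))
               <= C * Ms * (nv * (d * d) + e * (nv * (2 * d + 1) + (d + 1) * (d + 1)))).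
  { replace (C * (nv + e) * (Ms * ((d + e) * (d + e)))) with (C * Ms * ((nv + e) * ((d + e) * (d + e))))
      by ring.
    apply Rmult_le_compat_l; [nra|auto]. }
  nra.
Qed.

End RegularEstimate.

Lemma SOSH_of_reg_normal_estimate n (C : Vec n -> Prop) xb delta M : 0 < delta -> 0 < M ->
  (forall x v, C x -> vnorm (vsub x xb) < delta -> reg_normal C x v ->
     vinner v (vsub x xb) <= M * vnorm v * (vnorm (vsub x xb) * vnorm (vsub x xb))) ->
  SOSH C xb.
Proof.
  intros hdelta hM Hest. exists (delta / 2), M. split; [lra|split; [auto|]].
  intros x hx hxd hne v [xs [ys [Hxs [Hys [Hcx Hcy]]]]] hv1.
  assert (Hlim : vinner v (vsub x xb) <= M * vnorm v * (vnorm (vsub x xb) * vnorm (vsub x xb))).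
  { apply (Un_cv_le (fun k => vinner (ys k) (vsub (xs k) xb))
                    (fun k => M * vnorm (ys k) * (vnorm (vsub (xs k) xb) * vnorm (vsub (xs k) xb)))).
    - apply vinner_cv; [auto|apply vconv_vsub_const; auto].
    - apply CV_mult; [apply CV_mult; [apply Un_cv_const|apply vnorm_cv; auto]|].
      apply CV_mult; apply vnorm_cv, vconv_vsub_const; auto.
    - destruct (Hcx (delta / 2)) as [N HN]; [lra|]. exists N. intros k hk.
      apply Hest; auto. pose proof (vnorm_vsub_triang (xs k) x xb). specialize (HN k hk). lra. }
  rewrite hv1, vnorm_vsub_sym in Hlim. nra.
Qed.

Theorem proposition4p4 (n m : nat) (K : Fin.t m -> Vec n -> Prop) (xb : Vec n) :
  (forall l, closed_setV (K l)) ->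
  inter_sets K xb ->
  (forall l, SOSH (K l) xb) ->
  lin_reg_inter K xb ->
  SOSH (inter_sets K) xb.
Proof.
  intros HK _ HS Hlr.
  destruct (lin_reg_inter_uniform K xb Hlr) as [r [C [hr [hC HA]]]].
  destruct (SOSH_uniform n m K xb HS) as [ds [Ms [hds [hMs HSw]]]].
  apply (SOSH_of_reg_normal_estimate n _ xb (Rmin r ds) (C * Ms)).
  - apply Rmin_pos; auto.
  - apply Rmult_lt_0_compat; auto.
  - intros x v Hx Hxd Hv. apply (reg_normal_inter_estimate K xb r C ds Ms); auto.
Qed.
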